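(* Let $(\varphi_t)_{t\ge0}$ be a family of nonnegative measures on $\mathcal B(\mathbb R_+)$ satisfying $$\forall t\ge0,\ \forall A\in\mathcal B(\mathbb R_+),\ \forall\varepsilon>0,\ \exists\eta\in(0,1):\ |z|,|z'|<\eta\Rightarrow|\varphi_{t+z}(A+z')-\varphi_t(A+z')|<\varepsilon .$$ Then: (1) for almost every $t\ge0$ and all $0\le s<r$, $$\lim_{\Delta t\searrow0}\frac1{\Delta t}\int_0^{\Delta t}\big|\varphi_{t+\Delta t-u}((s+u,r+u])-\varphi_t((s+u,r+u])\big|\,du=0;$$ (2) for almost every $t\ge0$ and all $0\le s<r$, $$\lim_{\Delta t\searrow0}\frac1{\Delta t}\int_0^{\Delta t}\varphi_{t+\Delta t-u}((s+u,r+u])\,du=\varphi_t((s,r]).$$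
   Context: $A+z'$ denotes the translate $\{a+z':a\in A\}$. *)

From HB Require Import structures.
From mathcomp Require Import all_boot all_order all_algebra.
From mathcomp Require Import all_classical all_reals all_analysis.
Set Implicit Arguments. Unset Strict Implicit. Unset Printing Implicit Defensive.

From HB Require Import structures.
From mathcomp Require Import all_boot all_order all_algebra.
From mathcomp Require Import all_classical all_reals all_analysis.
From mathcomp Require Import lra.
Set Implicit Arguments.
Unset Strict Implicit.
Unset Printing Implicit Defensive.
Import Order.TTheory GRing.Theory Num.Theory.
Local Open Scope classical_set_scope.
Local Open Scope ring_scope.

(* Write t + dt - u = t + z and (s + u, r + u] = (s, r] + z' with z = dt - u
   and z' = u, both in [0, dt].  Once dt is below the eta of the continuity
   hypothesis, the integrand of (1) is uniformly below eps on [0, dt], hence so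
   is its average; no exceptional null set of times is needed.  For (2) one
   must also compare phi_t((s + u, r + u]) with phi_t((s, r]): their difference
   is controlled by the increments of the distribution function
   y |-> phi_t((-oo, y]) of the finite measure phi_t to the right of s and r,
   which are small by right continuity. *)

Lemma cvge_near_bounds (R : realType) (I : Type) (F : set_system I)
  {FF : Filter F} (g : I -> \bar R) (l : R) :
  (forall e, 0 < e -> \forall x \near F, ((l - e)%:E <= g x <= (l + e)%:E)%E) ->
  g @ F --> l%:E.
Proof.
move=> gl; apply/fine_cvgP; split.
  near=> x.
  have /andP[lg gu] : ((l - 1)%:E <= g x <= (l + 1)%:E)%E by near: x; exact: gl.
  by rewrite fin_numElt (lt_le_trans (ltNyr _) lg) (le_lt_trans gu (ltry _)).
apply/cvgrPdist_le => e e0; near=> x; rewrite /=.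
have : ((l - e)%:E <= g x <= (l + e)%:E)%E by near: x; exact: gl.
case: (g x) => [y||] //=; rewrite ?leey ?leNye ?andbF // !lee_fin => /andP[ly yl].
by rewrite ler_norml; apply/andP; split; lra.
Unshelve. all: by end_near.
Qed.

(* Unlike [ge0_le_integral], no measurability is needed: the integral of a
   nonnegative function is the supremum of the integrals of the simple
   functions below it. *)
Lemma ge0_le_integral_nonmeasurable d (T : measurableType d) (R : realType)
  (mu : {measure set T -> \bar R}) (D : set T) (f g : T -> \bar R) :
  (forall x, D x -> (0 <= f x)%E) -> (forall x, D x -> (f x <= g x)%E) ->
  (\int[mu]_(x in D) f x <= \int[mu]_(x in D) g x)%E.
Proof.
move=> f0 fg.
have g0 x : D x -> (0 <= g x)%E by move=> Dx; exact: le_trans (f0 x Dx) (fg x Dx).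
rewrite (ge0_integralE mu f0) (ge0_integralE mu g0) /=.
apply: ereal_sup_le => _ [h /= hf <-]; exists h => //= x.
apply: le_trans (hf x) _; rewrite /patch; case: ifP => // /set_mem Dx; exact: fg.
Qed.

Section itv_average.
Variable R : realType.

Lemma integral_cst_itv0 (c dt : R) : 0 < dt ->
  (\int[lebesgue_measure]_(u in [set` `[0, dt]%R]) c%:E = (c * dt)%:E)%E.
Proof.
move=> dt0; rewrite integral_cst //= lebesgue_measure_itv /=.
by rewrite lte_fin dt0 oppr0 adde0 -EFinM.
Qed.

Lemma itv_average_bounds (f : R -> \bar R) (dt a b : R) : 0 < dt ->
  (forall u, 0 <= u <= dt -> (0 <= f u)%E) ->
  (forall u, 0 <= u <= dt -> (a%:E <= f u <= b%:E)%E) ->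
  (a%:E <= (dt^-1)%:E * \int[lebesgue_measure]_(u in [set` `[0, dt]%R]) f u
     <= b%:E)%E.
Proof.
move=> dt0 f0 fab.
have dtV0 : (0 <= (dt^-1)%:E)%E by rewrite lee_fin invr_ge0 ltW.
have average_cst c : ((dt^-1)%:E * (c * dt)%:E = c%:E)%E.
  by rewrite -EFinM mulrCA mulVf ?gt_eqF // mulr1.
apply/andP; split.
- apply: (@le_trans _ _ (Num.max 0 a)%:E); first by rewrite lee_fin le_max lexx orbT.
  rewrite -[X in (X <= _)%E]average_cst -integral_cst_itv0 //.
  apply: lee_wpmul2l => //; apply: ge0_le_integral_nonmeasurable => u.
    by rewrite lee_fin le_max lexx.
  rewrite /= in_itv /= => u0dt; have /andP[au _] := fab u u0dt.
  by rewrite EFin_max ge_max au andbT; exact: f0.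
- rewrite -[X in (_ <= X)%E]average_cst -integral_cst_itv0 //.
  apply: lee_wpmul2l => //; apply: ge0_le_integral_nonmeasurable => u;
    rewrite /= in_itv /= => u0dt; first exact: f0.
  by have /andP[] := fab u u0dt.
Qed.

Lemma cvg_itv_average (F : R -> R -> \bar R) (l : R) :
  (forall dt u, (0 <= F dt u)%E) ->
  (forall e, 0 < e -> \forall dt \near 0^'+,
     forall u, 0 <= u <= dt -> ((l - e)%:E <= F dt u <= (l + e)%:E)%E) ->
  (fun dt => (dt^-1)%:E *
     \int[lebesgue_measure]_(u in [set` `[0, dt]%R]) F dt u)%E @ 0^'+ --> l%:E.
Proof.
move=> F0 Fl; apply: cvge_near_bounds => e e0; near=> dt.
apply: itv_average_bounds => [|u _|].
- by near: dt; exact: nbhs_right_gt.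
- exact: F0.
- by near: dt; exact: Fl.
Unshelve. all: by end_near.
Qed.

End itv_average.

Lemma image_addr_itvoc (R : realType) (s r u : R) :
  [set a + u | a in [set` `]s, r]]] = [set` `]s + u, r + u]%R].
Proof.
apply/seteqP; split=> x /=.
- case=> a /=; rewrite !in_itv /= => /andP[sa ar] <-; apply/andP; split; lra.
- rewrite in_itv /= => /andP[sx xr]; exists (x - u); last by rewrite subrK.
  by rewrite /= in_itv /=; apply/andP; split; lra.
Qed.

Section finite_measure_cdf.
Variables (R : realType) (mu : {measure set R -> \bar R}).
Hypothesis mu_fin : forall S, measurable S -> mu S \is a fin_num.

Let cdf (y : R) := fine (mu [set` `]-oo, y]]).

Let measure_itvoc a b : a <= b -> mu [set` `]a, b]] = (cdf b - cdf a)%:E.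
Proof.
move=> ab; rewrite /cdf.
have -> : [set` `]-oo, b]] = [set` `]-oo, a]] `|` [set` `]a, b]].
  apply/seteqP; split=> x /=; rewrite !in_itv /=.
  - by move=> xb; have [xa|ax] := leP x a; [left|right; apply/andP; split].
  - by case=> [xa|/andP[_ //]]; exact: le_trans xa ab.
rewrite measureU //; last first.
  by apply/seteqP; split=> x //= [] /=; rewrite !in_itv /= => xa /andP[ax _]; lra.
by rewrite fineD ?mu_fin // addrC addKr fineK ?mu_fin.
Qed.

Let cdf_le a b : a <= b -> cdf a <= cdf b.
Proof.
move=> ab; apply: fine_le; rewrite ?mu_fin //.
by apply: le_measure; rewrite ?inE // => x /=; rewrite !in_itv /= => /le_trans; apply.
Qed.

Let cdf_right_cont x e : 0 < e ->
  exists2 eta, 0 < eta & forall u, 0 <= u -> u < eta -> cdf (x + u) <= cdf x + e.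
Proof.
move=> e0; pose F (n : nat) := [set` `]-oo, x + n.+1%:R^-1]].
have capF : \bigcap_n F n = [set` `]-oo, x]].
  apply/seteqP; split=> y /=; rewrite ?in_itv /=.
  - move=> Fy; rewrite leNgt; apply/negP => /ltr_add_invr[k xk].
    by have := Fy k I; rewrite /F /= in_itv /= => /(lt_le_trans xk); rewrite ltxx.
  - by move=> yx n _; rewrite /F /= in_itv /= (le_trans yx) // lerDl.
have : mu \o F @ \oo --> mu [set` `]-oo, x]].
  rewrite -capF; apply: nonincreasing_cvg_mu.
  - by rewrite -ge0_fin_numE ?measure_ge0 ?mu_fin //; exact: measurable_itv.
  - by move=> n; exact: measurable_itv.
  - by rewrite capF; exact: measurable_itv.
  - move=> m n mn; apply/subsetPset => y; rewrite /F /= !in_itv /= => /le_trans.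
    by apply; rewrite lerD2l lef_pV2 ?posrE // ler_nat.
rewrite -[mu _]fineK ?mu_fin // => /fine_cvgP[_ /cvgrPdist_le /(_ e e0)[N _ FN]].
exists N.+1%:R^-1 => [|u u0 uN]; first by rewrite invr_gt0.
have xuN : x + u <= x + N.+1%:R^-1 by rewrite lerD2l ltW.
apply: (le_trans (cdf_le xuN)).
by have := FN N (leqnn N); rewrite /= /F ler_norml => /andP[+ _]; rewrite /cdf; lra.
Qed.

Lemma measure_shift_itvoc_right_cont s r e : s <= r -> 0 < e ->
  exists2 eta, 0 < eta & forall u, 0 <= u -> u < eta ->
    `|fine (mu [set` `]s + u, r + u]%R]) - fine (mu [set` `]s, r]])| <= e.
Proof.
move=> sr e0.
have [eta_s eta_s0 cdf_s] := cdf_right_cont s e0.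
have [eta_r eta_r0 cdf_r] := cdf_right_cont r e0.
exists (Num.min eta_s eta_r) => [|u u0]; first by rewrite lt_min eta_s0.
rewrite lt_min => /andP[us ur].
have [su ru] : s <= s + u /\ r <= r + u by rewrite !lerDl.
have := cdf_le su; have := cdf_le ru; have := cdf_s u u0 us; have := cdf_r u u0 ur.
rewrite !measure_itvoc ?lerD2r //=.
by move=> *; rewrite ler_norml; apply/andP; split; lra.
Qed.

End finite_measure_cdf.

Lemma lee_dist_fin_trans (R : realType) (a b : \bar R) (l d d' : R) :
  (`|a - b| < d%:E)%E -> `|fine b - l| <= d' -> b \is a fin_num ->
  ((l - (d + d'))%:E <= a <= (l + (d + d'))%:E)%E.
Proof.
case: b => [y||] //=; case: a => [x||] //=; rewrite lte_fin !lee_fin.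
by rewrite ltr_norml ler_norml => /andP[? ?] /andP[? ?] _; apply/andP; split; lra.
Qed.

Lemma subset_itvoc_ge0 (R : realType) (s r : R) : 0 <= s ->
  [set` `]s, r]] `<=` [set` `[0, +oo[].
Proof. by move=> s0; apply: subset_itv; rewrite bnd_simp. Qed.

Section propositionA1.
Variables (R : realType) (phi : R -> {measure set R -> \bar R}).
Hypothesis phi_supp : forall t : R, 0 <= t -> phi t [set` `]-oo, 0[] = 0%E.
Hypothesis phi_cont : forall t : R, 0 <= t ->
  forall A : set R, measurable A -> A `<=` [set` `[0, +oo[] ->
  forall eps : R, 0 < eps ->
  exists eta : R, 0 < eta < 1 /\
    forall z z' : R, `|z| < eta -> `|z'| < eta -> 0 <= t + z ->
      (`| phi (t + z)%R [set (a + z')%R | a in A] - phi t [set (a + z')%R | a in A] |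
         < eps%:E)%E.

Lemma phi_fin_num t : 0 <= t -> forall S, measurable S -> phi t S \is a fin_num.
Proof.
move=> t0; pose P := [set` `[(0:R), +oo[].
(* |phi_t P - phi_t P| = +oo when phi_t P = +oo, so the case z = z' = 0 of
   the hypothesis forces finiteness *)
have [eta [/andP[eta0 _] /(_ 0 0)]] :=
  phi_cont t0 (measurable_itv _) (@subset_refl _ P) ltr01.
rewrite normr0 addr0; under eq_imagel do rewrite addr0.
rewrite image_id => /(_ eta0 eta0 t0) PP.
have Pfin : phi t P \is a fin_num by move: PP; case: (phi t P).
have Tfin : phi t [set: R] \is a fin_num.
  have -> : [set: R] = [set` `]-oo, 0[] `|` P.
    apply/seteqP; split=> x // _; rewrite /P /= !in_itv /= andbT.
    by have [x0|x0] := ltP x 0; [left|right].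
  rewrite measureU //.
  - by rewrite [X in (X + _)%E](_ : _ = 0%E) ?add0e //; exact: phi_supp.
  - exact: measurable_itv.
  - apply/seteqP; split=> x // [] /=; rewrite /P /= !in_itv /= andbT.
    by move=> /lt_le_trans /[apply]; rewrite ltxx.
move=> S mS; rewrite ge0_fin_numE ?measure_ge0 //.
apply: le_lt_trans (le_measure _ _ _ (subsetT S)) _; rewrite ?inE //.
by rewrite -ge0_fin_numE ?measure_ge0.
Qed.

Lemma cvg_itv_average_abs_diff t s r : 0 <= t -> 0 <= s ->
  (fun dt => (dt^-1)%:E * \int[lebesgue_measure]_(u in [set` `[0, dt]%R])
     `| phi (t + dt - u)%R [set` `]s + u, r + u]%R] - phi t [set` `]s + u, r + u]%R] |)%E
  @ 0^'+ --> 0%E.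
Proof.
move=> t0 s0; apply: cvg_itv_average => [dt u|e e0]; first exact: abse_ge0.
have [eta [/andP[eta0 _] phi_eta]] :=
  phi_cont t0 (measurable_itv `]s, r]) (subset_itvoc_ge0 s0) e0.
near=> dt => u /andP[u0 udt].
have dt_eta : dt < eta by near: dt; exact: nbhs_right_lt.
have := phi_eta (dt - u) u; rewrite image_addr_itvoc addrA.
rewrite ger0_norm ?subr_ge0 // ger0_norm // => /(_ ltac:(lra) ltac:(lra) ltac:(lra)).
rewrite !add0r => /ltW ->; rewrite andbT (le_trans _ (abse_ge0 _)) //.
by rewrite lee_fin oppr_le0 ltW.
Unshelve. all: by end_near.
Qed.

Lemma cvg_itv_average_shifted t s r : 0 <= t -> 0 <= s -> s <= r ->
  (fun dt => (dt^-1)%:E * \int[lebesgue_measure]_(u in [set` `[0, dt]%R])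
     phi (t + dt - u)%R [set` `]s + u, r + u]%R])%E
  @ 0^'+ --> phi t [set` `]s, r]].
Proof.
move=> t0 s0 sr; have phit_fin := phi_fin_num t0.
rewrite -[phi t _]fineK ?phit_fin //.
apply: cvg_itv_average => [dt u|e e0]; first exact: measure_ge0.
have e20 : 0 < e / 2 by rewrite divr_gt0.
have [eta [/andP[eta0 _] phi_eta]] :=
  phi_cont t0 (measurable_itv `]s, r]) (subset_itvoc_ge0 s0) e20.
have [eta' eta'0 shift_eta'] := measure_shift_itvoc_right_cont phit_fin sr e20.
near=> dt => u /andP[u0 udt].
have : dt < Num.min eta eta' by near: dt; apply: nbhs_right_lt; rewrite lt_min eta0.
rewrite lt_min => /andP[dt_eta dt_eta'].
have := phi_eta (dt - u) u; rewrite image_addr_itvoc addrA.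
rewrite ger0_norm ?subr_ge0 // ger0_norm // => /(_ ltac:(lra) ltac:(lra) ltac:(lra)).
move=> /lee_dist_fin_trans /(_ (shift_eta' u u0 ltac:(lra))).
by rewrite -splitr; apply; apply: phit_fin; exact: measurable_itv.
Unshelve. all: by end_near.
Qed.

End propositionA1.

Theorem propositionA1 (R : realType) (phi : R -> {measure set R -> \bar R})
  (phi_supp : forall t : R, 0 <= t -> phi t [set` `]-oo, 0[] = 0%E)
  (phi_cont : forall t : R, 0 <= t ->
     forall A : set R, measurable A -> A `<=` [set` `[0, +oo[] ->
     forall eps : R, 0 < eps ->
     exists eta : R, 0 < eta < 1 /\
       forall z z' : R, `|z| < eta -> `|z'| < eta -> 0 <= t + z ->
         (`| phi (t + z)%R [set (a + z')%R | a in A] - phi t [set (a + z')%R | a in A] |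
            < eps%:E)%E) :
  {ae lebesgue_measure, forall t : R, 0 <= t ->
     forall s r : R, 0 <= s -> s < r ->
       ((fun dt : R => (dt^-1)%:E *
           \int[lebesgue_measure]_(u in [set` `[0, dt]%R])
              `| phi (t + dt - u)%R [set` `]s + u, r + u]%R] - phi t [set` `]s + u, r + u]%R] |)%E
          @ 0^'+ --> 0%E)}
  /\
  {ae lebesgue_measure, forall t : R, 0 <= t ->
     forall s r : R, 0 <= s -> s < r ->
       ((fun dt : R => (dt^-1)%:E *
           \int[lebesgue_measure]_(u in [set` `[0, dt]%R]) phi (t + dt - u)%R [set` `]s + u, r + u]%R])%E
          @ 0^'+ --> phi t [set` `]s, r]%R])}.
Proof.
split; apply: aeW => t t0 s r s0 sr.
- exact: cvg_itv_average_abs_diff.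
- exact: cvg_itv_average_shifted (ltW sr).
Qed.
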